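(* For every set $X$, both $\mathcal{PI}^{\ast}_X=(P_X,\star)$ and $\overline{\mathcal{PI}^{\ast}}_X=(P_X,\circ)$ are inverse semigroups.
   Context: Let $X$ be a set and $X'=\{x':x\in X\}$ a disjoint copy of $X$. Let $P_X$ be the set of all partitions of $X\cup X'$ each of whose blocks is either a singleton (called a point) or a generalised line, i.e. a subset meeting both $X$ and $X'$. An element is determined by its generalised lines; write $\alpha=\{A_i\cup B_i'\}_{i\in I}$, where the nonempty sets $A_i\subseteq X$ are pairwise disjoint, the nonempty sets $B_i\subseteq X$ are pairwise disjoint, $B_i'=\{b':b\in B_i\}$, and all remaining elements of $X\cup X'$ are points. Product $\star$: let $X''$ be a third copy of $X$; regard $\alpha$ as a partition of $X\cup X''$ (replacing each $x'$ by $x''$) and $\beta$ as a partition of $X''\cup X'$ (replacing each $x\in X$ by $x''$), and let $\sim$ be the smallest equivalence relation on $X\cup X''\cup X'$ containing all blocks of both. Then $\alpha\star\beta$ is the partition of $X\cup X'$ in which two distinct elements $u,v$ lie in the same block iff $u\sim v$ and the $\sim$-class of $u$ contains no singleton block of (the relabelled) $\alpha$ or $\beta$. Product $\circ$: $\alpha\circ\beta$ is the element of $P_X$ whose generalised lines are exactly the sets $A\cup D'$ such that $A\cup B'$ is a generalised line of $\alpha$ and $B\cup D'$ is a generalised line of $\beta$ for the same set $B$; all other elements are points. *)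

(* Partitions of X ∪ X' are represented as equivalence
   relations on the sum type X + X (inl x = x ∈ X, inr x = x' ∈ X'). *)
From Stdlib Require Import Relations Relation_Operators.

Section PX.
Variable X : Type.

Definition T2 := (X + X)%type.
Definition prel := T2 -> T2 -> Prop.

Definition req (R S : prel) : Prop := forall u v, R u v <-> S u v.

Definition is_point (R : prel) (u : T2) : Prop := forall v, R u v -> v = u.

Definition is_genline_at (R : prel) (u : T2) : Prop :=
  (exists a, R u (inl a)) /\ (exists b, R u (inr b)).

Definition isPX (R : prel) : Prop :=
  equivalence T2 R /\ forall u, is_point R u \/ is_genline_at R u.

(* three copies X, X'', X' *)
Inductive T3 : Type := Top (x : X) | Mid (x : X) | Bot (x : X).

Definition embA (p : T2) : T3 := match p with inl x => Top x | inr x => Mid x end.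
Definition embB (p : T2) : T3 := match p with inl x => Mid x | inr x => Bot x end.
Definition embC (p : T2) : T3 := match p with inl x => Top x | inr x => Bot x end.

Definition relA (R : prel) (u v : T3) : Prop :=
  exists p q, u = embA p /\ v = embA q /\ R p q.
Definition relB (S : prel) (u v : T3) : Prop :=
  exists p q, u = embB p /\ v = embB q /\ S p q.

Definition sim (R S : prel) : T3 -> T3 -> Prop :=
  clos_refl_sym_trans T3 (fun u v => relA R u v \/ relB S u v).

Definition is_point3 (R S : prel) (w : T3) : Prop :=
  (exists p, w = embA p /\ is_point R p) \/ (exists p, w = embB p /\ is_point S p).

Definition star (R S : prel) : prel := fun u v =>
  u = v \/
  (sim R S (embC u) (embC v) /\ forall w, sim R S (embC u) w -> ~ is_point3 R S w).

(* circ: generalised lines A ∪ D' with A ∪ B' a line of R (block of w1)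
   and B ∪ D' a line of S (block of w2), same B *)
Definition circ_line (R S : prel) (w1 w2 : T2) : Prop :=
  is_genline_at R w1 /\ is_genline_at S w2 /\
  (forall b, R w1 (inr b) <-> S w2 (inl b)).

Definition in_circ_block (R S : prel) (w1 w2 : T2) (u : T2) : Prop :=
  match u with inl a => R w1 (inl a) | inr d => S w2 (inr d) end.

Definition circ (R S : prel) : prel := fun u v =>
  u = v \/
  exists w1 w2, circ_line R S w1 w2 /\
    in_circ_block R S w1 w2 u /\ in_circ_block R S w1 w2 v.

End PX.

Definition inverse_semigroup {X : Type} (P : prel X -> Prop)
  (op : prel X -> prel X -> prel X) : Prop :=
  (forall R S, P R -> P S -> P (op R S)) /\
  (forall R S U, P R -> P S -> P U -> req X (op (op R S) U) (op R (op S U))) /\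
  (forall R, P R -> exists S, P S /\
      req X (op (op R S) R) R /\ req X (op (op S R) S) S /\
      forall S', P S' -> req X (op (op R S') R) R -> req X (op (op S' R) S') S' ->
                 req X S' S).

From Stdlib Require Import Relations Relation_Operators FunctionalExtensionality
  PropExtensionality Classical.

(* The inverse of [R] is, for both products, its transpose [R^T] (swap [X] and [X']).

   For [*], both [(R * S) * U] and [R * (S * U)] equal [four R S U]: glue [R], [S], [U] along
   four copies of [X], join the outer copies, and delete every class containing a point.
   This description is invariant under transposition, which reverses products, so it
   suffices to identify [(R * S) * U] with it. For [S = R^T, U = R] the four-layer classes are
   copies of classes of [R], whence [R * R^T * R = R]. Uniqueness of inverses follows since
   idempotents commute: an idempotent [e] equals [(e * e^T) * (e^T * e)], a product of
   diagonal elements (every line is closed under [x <-> x']), and diagonal elements commute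
   because they equal their transposes.

   For [o], an element is determined by its generalised lines, the lines of [R o S] are the
   composites [A ∪ D'] of lines [A ∪ B'] of [R] and [B ∪ D'] of [S], and the lines of [R^T]
   are the mirror images of those of [R]; all the axioms are then statements about lines. *)

#[local] Arguments Top {X} x.
#[local] Arguments Mid {X} x.
#[local] Arguments Bot {X} x.

Lemma clos_rst_map {A B : Type} (E : relation A) (F : relation B) (f : A -> B) :
  (forall u v, E u v -> clos_refl_sym_trans B F (f u) (f v)) ->
  forall u v, clos_refl_sym_trans A E u v -> clos_refl_sym_trans B F (f u) (f v).
Proof.
  intros Hstep u v Huv. induction Huv.
  - apply Hstep; assumption.
  - apply rst_refl.
  - apply rst_sym; assumption.
  - eapply rst_trans; eassumption.
Qed.

Lemma clos_rst_invariant {A : Type} (E : relation A) (P : A -> Prop) (s : A) :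
  symmetric A E -> (forall u v, P u -> E u v -> P v) -> P s ->
  forall w, clos_refl_sym_trans A E s w -> P w.
Proof.
  intros Esym Hstep Hs w Hw. apply clos_rst_rstn1 in Hw.
  induction Hw as [|y z Hyz _ IH]; [exact Hs|].
  destruct Hyz; eauto.
Qed.

Section InverseUnique.
Variables (T : Type) (P : T -> Prop) (m : T -> T -> T).
Hypothesis m_closed : forall a b, P a -> P b -> P (m a b).
Hypothesis m_assoc : forall a b c, P a -> P b -> P c -> m (m a b) c = m a (m b c).
Hypothesis idempotents_commute :
  forall e f, P e -> P f -> m e e = e -> m f f = f -> m e f = m f e.

Lemma mul_inverse_idem_r a x : P a -> P x -> m (m a x) a = a -> m (m x a) (m x a) = m x a.
Proof.
  intros Pa Px Ha. rewrite (m_assoc x a (m x a)), <- (m_assoc a x a), Ha; auto.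
Qed.

Lemma mul_inverse_idem_l a x : P a -> P x -> m (m a x) a = a -> m (m a x) (m a x) = m a x.
Proof.
  intros Pa Px Ha. rewrite <- (m_assoc (m a x) a x), Ha; auto.
Qed.

Lemma inverse_unique a x y : P a -> P x -> P y ->
  m (m a x) a = a -> m (m x a) x = x -> m (m a y) a = a -> m (m y a) y = y -> x = y.
Proof.
  intros Pa Px Py Hax Hxa Hay Hya.
  assert (Ex : m (m y a) x = x).
  { transitivity (m (m (m y a) (m x a)) x).
    - rewrite (m_assoc (m y a) (m x a) x), Hxa; auto.
    - rewrite (idempotents_commute (m y a) (m x a)) by auto using mul_inverse_idem_r.
      rewrite (m_assoc x a (m y a)), <- (m_assoc a y a), Hay, Hxa; auto. }
  assert (Ey : m y (m a x) = y).
  { transitivity (m y (m (m a y) (m a x))).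
    - rewrite <- (m_assoc y (m a y) (m a x)), <- (m_assoc y a y), Hya; auto.
    - rewrite (idempotents_commute (m a y) (m a x)) by auto using mul_inverse_idem_l.
      rewrite <- (m_assoc (m a x) a y), Hax, <- (m_assoc y a y), Hya; auto. }
  rewrite <- Ex, m_assoc, Ey; auto.
Qed.
End InverseUnique.

Section Partitions.
Context {X : Type}.
Local Notation T2 := (T2 X).
Local Notation rel := (prel X).
Local Notation PX := (isPX X).
Local Notation point := (is_point X).
Local Notation line_at := (is_genline_at X).

Lemma req_eq (R S : rel) : req X R S -> R = S.
Proof.
  intro H. apply functional_extensionality; intro u.
  apply functional_extensionality; intro v. apply propositional_extensionality, H.
Qed.

Lemma req_refl (R : rel) : req X R R.
Proof. intros u v; reflexivity. Qed.

Lemma PX_refl R : PX R -> forall u, R u u.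
Proof. intros [[Hr _ _] _]. exact Hr. Qed.

Lemma PX_sym R : PX R -> forall u v, R u v -> R v u.
Proof. intros [[_ _ Hs] _]. exact Hs. Qed.

Lemma PX_trans R : PX R -> forall u v w, R u v -> R v w -> R u w.
Proof. intros [[_ Ht _] _]. exact Ht. Qed.

Lemma PX_nonpoint_line R u : PX R -> ~ point R u -> line_at R u.
Proof. intros [_ H] Hu. destruct (H u); tauto. Qed.

Definition swap (p : T2) : T2 := match p with inl x => inr x | inr x => inl x end.

Lemma swap_involutive p : swap (swap p) = p.
Proof. destruct p; reflexivity. Qed.

Definition transp (R : rel) : rel := fun p q => R (swap p) (swap q).

Lemma transp_involutive R : transp (transp R) = R.
Proof.
  apply req_eq. intros u v. unfold transp. rewrite !swap_involutive. reflexivity.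
Qed.

Lemma point_transp R p : point (transp R) p <-> point R (swap p).
Proof.
  unfold is_point, transp. split; intros H v Hv.
  - rewrite <- (swap_involutive v) in Hv. apply H in Hv.
    rewrite <- Hv, swap_involutive. reflexivity.
  - apply H in Hv. rewrite <- (swap_involutive v), Hv, swap_involutive. reflexivity.
Qed.

Lemma transp_PX R : PX R -> PX (transp R).
Proof.
  intros HR. split.
  - unfold transp. split.
    + intro u. apply PX_refl, HR.
    + intros u v w. apply PX_trans, HR.
    + intros u v. apply PX_sym, HR.
  - intro u. destruct (proj2 HR (swap u)) as [H|[[a Ha] [b Hb]]].
    + left. apply point_transp, H.
    + right. unfold transp. split; [exists b | exists a]; assumption.
Qed.

End Partitions.

Lemma inverse_semigroup_intro {X : Type} (P : prel X -> Prop)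
  (op : prel X -> prel X -> prel X) (inv : prel X -> prel X) :
  (forall R S, P R -> P S -> P (op R S)) ->
  (forall R S U, P R -> P S -> P U -> op (op R S) U = op R (op S U)) ->
  (forall R, P R -> P (inv R)) ->
  (forall R, inv (inv R) = R) ->
  (forall R, P R -> op (op R (inv R)) R = R) ->
  (forall R S, P R -> P S -> op (op R S) R = R -> op (op S R) S = S -> S = inv R) ->
  inverse_semigroup P op.
Proof.
  intros Hclosed Hassoc Hinv Hinvinv Hregular Hunique. split; [exact Hclosed|split].
  - intros R S U HR HS HU. rewrite Hassoc by assumption. apply req_refl.
  - intros R HR. exists (inv R). split; [auto|split; [|split]].
    + rewrite Hregular by assumption. apply req_refl.
    + rewrite <- (Hinvinv R) at 2. rewrite Hregular by auto. apply req_refl.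
    + intros S HS H1 H2. apply req_eq in H1, H2. rewrite (Hunique R S) by assumption.
      apply req_refl.
Qed.

Section Star.
Context {X : Type}.
Local Notation T2 := (T2 X).
Local Notation T3 := (T3 X).
Local Notation rel := (prel X).
Local Notation PX := (isPX X).
Local Notation point := (is_point X).
Local Notation line_at := (is_genline_at X).
Local Notation point3 := (is_point3 X).
Local Notation sim := (sim X).
Local Notation star := (star X).
Local Notation eA := (embA X).
Local Notation eB := (embB X).
Local Notation eC := (embC X).

Lemma sim_refl R S z : sim R S z z.
Proof. apply rst_refl. Qed.

Lemma sim_sym R S z z' : sim R S z z' -> sim R S z' z.
Proof. apply rst_sym. Qed.

Lemma sim_trans R S z z' z'' : sim R S z z' -> sim R S z' z'' -> sim R S z z''.
Proof. apply rst_trans. Qed.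

Lemma sim_embA R S p q : R p q -> sim R S (eA p) (eA q).
Proof. intro H. apply rst_step. left. exists p, q. auto. Qed.

Lemma sim_embB R S p q : S p q -> sim R S (eB p) (eB q).
Proof. intro H. apply rst_step. right. exists p, q. auto. Qed.

Definition pointfree R S z := forall w, sim R S z w -> ~ point3 R S w.

Lemma starE R S u v :
  star R S u v <-> u = v \/ (sim R S (eC u) (eC v) /\ pointfree R S (eC u)).
Proof. reflexivity. Qed.

Lemma pointfree_sim R S z z' : sim R S z z' -> pointfree R S z -> pointfree R S z'.
Proof. intros H Hz w Hw. apply Hz. eapply sim_trans; eassumption. Qed.

Lemma pointfree_embA R S z p : pointfree R S z -> sim R S z (eA p) -> ~ point R p.
Proof. intros Hz H Hp. apply (Hz _ H). left. exists p. auto. Qed.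

Lemma pointfree_embB R S z p : pointfree R S z -> sim R S z (eB p) -> ~ point S p.
Proof. intros Hz H Hp. apply (Hz _ H). right. exists p. auto. Qed.

Lemma not_pointfree_point R S p : ~ pointfree R S (eC p) -> point (star R S) p.
Proof. intros N v H. apply starE in H. destruct H as [->|[_ Hp]]; tauto. Qed.

Lemma point_not_line_at R p : point R p -> ~ line_at R p.
Proof.
  intros Hp [[a Ha] [b Hb]]. apply Hp in Ha. apply Hp in Hb. congruence.
Qed.

Lemma pointfree_line_at R S p : PX R -> PX S -> pointfree R S (eC p) -> line_at (star R S) p.
Proof.
  intros HR HS Hp.
  assert (Hstar : forall q, sim R S (eC p) (eC q) -> star R S p q).
  { intros q Hq. apply starE. auto. }
  destruct p as [a|d].
  - destruct (PX_nonpoint_line R (inl a) HR) as [_ [b Hb]].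
    { apply (pointfree_embA _ _ _ _ Hp), sim_refl. }
    assert (Hab : sim R S (eC (inl a)) (eB (inl b))) by exact (sim_embA R S _ _ Hb).
    destruct (PX_nonpoint_line S (inl b) HS) as [_ [d Hd]].
    { exact (pointfree_embB _ _ _ _ Hp Hab). }
    split; [exists a | exists d]; apply Hstar.
    + apply sim_refl.
    + exact (sim_trans _ _ _ _ _ Hab (sim_embB R S _ _ Hd)).
  - destruct (PX_nonpoint_line S (inr d) HS) as [[b Hb] _].
    { apply (pointfree_embB _ _ _ _ Hp), sim_refl. }
    assert (Hdb : sim R S (eC (inr d)) (eA (inr b))) by exact (sim_embB R S _ _ Hb).
    destruct (PX_nonpoint_line R (inr b) HR) as [[a Ha] _].
    { exact (pointfree_embA _ _ _ _ Hp Hdb). }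
    split; [exists a | exists d]; apply Hstar.
    + exact (sim_trans _ _ _ _ _ Hdb (sim_embA R S _ _ Ha)).
    + apply sim_refl.
Qed.

Lemma star_PX R S : PX R -> PX S -> PX (star R S).
Proof.
  intros HR HS. split.
  - split.
    + intro u. left. reflexivity.
    + intros u v w H1 H2. apply starE in H1, H2. apply starE.
      destruct H1 as [->|[H1 P1]]; [assumption|].
      destruct H2 as [<-|[H2 _]]; [right; auto|].
      right. split; [eapply sim_trans|]; eassumption.
    + intros u v H. apply starE in H. apply starE.
      destruct H as [->|[H P]]; [left; reflexivity|].
      right. split; [apply sim_sym | eapply pointfree_sim]; eassumption.
  - intro u. destruct (classic (pointfree R S (eC u))) as [P|N].
    + right. apply pointfree_line_at; assumption.
    + left. apply not_pointfree_point, N.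
Qed.

Definition flip3 (z : T3) : T3 :=
  match z with Top x => Bot x | Mid x => Mid x | Bot x => Top x end.

Lemma flip3_involutive z : flip3 (flip3 z) = z.
Proof. destruct z; reflexivity. Qed.

Lemma flip3_embA p : flip3 (eA p) = eB (swap p).
Proof. destruct p; reflexivity. Qed.

Lemma flip3_embB p : flip3 (eB p) = eA (swap p).
Proof. destruct p; reflexivity. Qed.

Lemma flip3_embC p : flip3 (eC p) = eC (swap p).
Proof. destruct p; reflexivity. Qed.

Lemma sim_transp_flip3 R S z z' :
  sim (transp S) (transp R) z z' -> sim R S (flip3 z) (flip3 z').
Proof.
  apply clos_rst_map. intros a b [[p [q [-> [-> H]]]]|[p [q [-> [-> H]]]]].
  - rewrite !flip3_embA. apply sim_embB, H.
  - rewrite !flip3_embB. apply sim_embA, H.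
Qed.

Lemma sim_transp R S z z' : sim (transp S) (transp R) z z' <-> sim R S (flip3 z) (flip3 z').
Proof.
  split; [apply sim_transp_flip3|]. intro H.
  rewrite <- (flip3_involutive z), <- (flip3_involutive z').
  apply sim_transp_flip3. rewrite !transp_involutive. exact H.
Qed.

Lemma point3_transp_flip3 R S z : point3 (transp S) (transp R) z -> point3 R S (flip3 z).
Proof.
  intros [[p [-> Hp]]|[p [-> Hp]]]; apply point_transp in Hp.
  - right. exists (swap p). rewrite flip3_embA. auto.
  - left. exists (swap p). rewrite flip3_embB. auto.
Qed.

Lemma pointfree_transp R S z :
  pointfree R S (flip3 z) -> pointfree (transp S) (transp R) z.
Proof.
  intros Hz w Hw Hp. apply (Hz (flip3 w)).
  - apply sim_transp, Hw.
  - apply point3_transp_flip3, Hp.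
Qed.

Lemma star_transp_sub R S u v :
  star R S u v -> star (transp S) (transp R) (swap u) (swap v).
Proof.
  intros [->|[H Hu]]; [left; reflexivity|right]. split.
  - apply sim_transp. rewrite !flip3_embC, !swap_involutive. exact H.
  - apply pointfree_transp. rewrite flip3_embC, swap_involutive. exact Hu.
Qed.

Lemma star_transp R S : transp (star R S) = star (transp S) (transp R).
Proof.
  apply req_eq. intros u v. split; intro H.
  - apply star_transp_sub in H. rewrite !swap_involutive in H. exact H.
  - apply star_transp_sub in H. rewrite !transp_involutive in H. exact H.
Qed.

Inductive T4 : Type := L0 (x : X) | L1 (x : X) | L2 (x : X) | L3 (x : X).

Definition e01 (p : T2) : T4 := match p with inl x => L0 x | inr x => L1 x end.
Definition e12 (p : T2) : T4 := match p with inl x => L1 x | inr x => L2 x end.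
Definition e23 (p : T2) : T4 := match p with inl x => L2 x | inr x => L3 x end.
Definition e03 (p : T2) : T4 := match p with inl x => L0 x | inr x => L3 x end.

Definition rel4 (R S U : rel) (w w' : T4) : Prop :=
  (exists p q, w = e01 p /\ w' = e01 q /\ R p q) \/
  (exists p q, w = e12 p /\ w' = e12 q /\ S p q) \/
  (exists p q, w = e23 p /\ w' = e23 q /\ U p q).

Definition sim4 R S U := clos_refl_sym_trans T4 (rel4 R S U).

Definition point4 R S U (w : T4) : Prop :=
  (exists p, w = e01 p /\ point R p) \/ (exists p, w = e12 p /\ point S p) \/
  (exists p, w = e23 p /\ point U p).

Definition pointfree4 R S U w := forall w', sim4 R S U w w' -> ~ point4 R S U w'.

Definition four R S U : rel := fun u v =>
  u = v \/ (sim4 R S U (e03 u) (e03 v) /\ pointfree4 R S U (e03 u)).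

Definition emb012 (z : T3) : T4 := match z with Top x => L0 x | Mid x => L1 x | Bot x => L2 x end.
Definition emb023 (z : T3) : T4 := match z with Top x => L0 x | Mid x => L2 x | Bot x => L3 x end.

Lemma emb012_embA p : emb012 (eA p) = e01 p. Proof. destruct p; reflexivity. Qed.
Lemma emb012_embB p : emb012 (eB p) = e12 p. Proof. destruct p; reflexivity. Qed.
Lemma emb012_embC p : emb012 (eC p) = emb023 (eA p). Proof. destruct p; reflexivity. Qed.
Lemma emb023_embB p : emb023 (eB p) = e23 p. Proof. destruct p; reflexivity. Qed.
Lemma emb023_embC p : emb023 (eC p) = e03 p. Proof. destruct p; reflexivity. Qed.

Lemma emb012_e01 z p : emb012 z = e01 p -> z = eA p.
Proof. destruct z, p; simpl; intro H; inversion H; reflexivity. Qed.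

Lemma emb012_e12 z p : emb012 z = e12 p -> z = eB p.
Proof. destruct z, p; simpl; intro H; inversion H; reflexivity. Qed.

Lemma emb012_e23 z p : emb012 z = e23 p -> exists b, p = inl b /\ z = Bot b.
Proof. destruct z, p; simpl; intro H; inversion H; eauto. Qed.

Lemma rel4_sym R S U : PX R -> PX S -> PX U -> symmetric T4 (rel4 R S U).
Proof.
  intros HR HS HU w w' [[p [q [-> [-> H]]]]|[[p [q [-> [-> H]]]]|[p [q [-> [-> H]]]]]].
  - left. exists q, p. repeat split. apply (PX_sym R HR), H.
  - right; left. exists q, p. repeat split. apply (PX_sym S HS), H.
  - right; right. exists q, p. repeat split. apply (PX_sym U HU), H.
Qed.

Lemma sim4_emb012 R S U z z' : sim R S z z' -> sim4 R S U (emb012 z) (emb012 z').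
Proof.
  apply clos_rst_map. intros a b [[p [q [-> [-> H]]]]|[p [q [-> [-> H]]]]]; apply rst_step.
  - left. exists p, q. rewrite !emb012_embA. auto.
  - right; left. exists p, q. rewrite !emb012_embB. auto.
Qed.

Lemma sim4_emb023 R S U z z' : sim (star R S) U z z' -> sim4 R S U (emb023 z) (emb023 z').
Proof.
  apply clos_rst_map. intros a b [[p [q [-> [-> H]]]]|[p [q [-> [-> H]]]]].
  - apply starE in H. destruct H as [->|[H _]]; [apply rst_refl|].
    rewrite <- !emb012_embC. apply sim4_emb012, H.
  - apply rst_step. right; right. exists p, q. rewrite !emb023_embB. auto.
Qed.

Lemma point4_emb012 R S U z : point3 R S z -> point4 R S U (emb012 z).
Proof.
  intros [[p [-> H]]|[p [-> H]]].
  - left. exists p. rewrite emb012_embA. auto.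
  - right; left. exists p. rewrite emb012_embB. auto.
Qed.

Section StarStar.
Variables R S U : rel.
Hypotheses (HR : PX R) (HS : PX S) (HU : PX U).
Variable u : T2.
Local Notation sim3 := (sim (star R S) U).

Lemma sim3_pointfree_step z p q : sim3 z (eA p) -> pointfree R S (eC p) ->
  sim R S (eC p) (eC q) -> sim3 z (eA q).
Proof.
  intros H1 Hp H2. eapply sim_trans; [exact H1|]. apply sim_embA, starE. auto.
Qed.

(* Every element of the four-layer class of [e03 u] comes from the class of [eC u] under
   [sim3]: directly in layer 3, or through the [sim R S]-class of a middle element. *)
Definition covered (w : T4) : Prop :=
  (exists d, w = L3 d /\ sim3 (eC u) (Bot d)) \/
  (exists p z, sim3 (eC u) (eA p) /\ sim R S (eC p) z /\ w = emb012 z).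

Lemma covered_e23 q : sim3 (eC u) (eB q) -> covered (e23 q).
Proof.
  intro H. destruct q as [b|d].
  - right. exists (inr b), (Bot b). split; [exact H|split; [apply sim_refl|reflexivity]].
  - left. exists d. auto.
Qed.

Lemma covered_e03 : covered (e03 u).
Proof.
  unfold covered. destruct u as [a|d].
  - right. exists (inl a), (Top a). auto using sim_refl.
  - left. exists d. auto using sim_refl.
Qed.

Section CoveredClass.
Hypothesis mid_pointfree : forall p, sim3 (eC u) (eA p) -> pointfree R S (eC p).

Lemma covered_step w w' : covered w -> rel4 R S U w w' -> covered w'.
Proof.
  intros [[d [-> Hd]]|[p [z [H1 [H2 ->]]]]]
    [[p1 [q [E [-> H]]]]|[[p1 [q [E [-> H]]]]|[p1 [q [E [-> H]]]]]].
  - destruct p1; discriminate.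
  - destruct p1; discriminate.
  - destruct p1; simpl in E; try discriminate. injection E as <-.
    apply covered_e23. eapply sim_trans; [exact Hd|]. exact (sim_embB _ _ (inr d) q H).
  - apply emb012_e01 in E as ->. right. exists p, (eA q).
    rewrite emb012_embA. split; [assumption|split; [|reflexivity]].
    eapply sim_trans; [exact H2|]. apply sim_embA, H.
  - apply emb012_e12 in E as ->. right. exists p, (eB q).
    rewrite emb012_embB. split; [assumption|split; [|reflexivity]].
    eapply sim_trans; [exact H2|]. apply sim_embB, H.
  - apply emb012_e23 in E as [b [-> ->]]. apply covered_e23.
    assert (Hb : sim3 (eC u) (eA (inr b))) by (eapply sim3_pointfree_step; eauto).
    eapply sim_trans; [exact Hb|]. exact (sim_embB _ _ (inl b) q H).
Qed.

Lemma covered_sim4 w : sim4 R S U (e03 u) w -> covered w.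
Proof.
  apply clos_rst_invariant.
  - apply rel4_sym; assumption.
  - exact covered_step.
  - exact covered_e03.
Qed.

End CoveredClass.

Lemma star_star_sub_four v : star (star R S) U u v -> four R S U u v.
Proof.
  intros [E|[Hs Hu]]; [left; exact E|right].
  assert (Hmid : forall p, sim3 (eC u) (eA p) -> pointfree R S (eC p)).
  { intros p Hp. apply NNPP. intro N. apply (Hu _ Hp). left. exists p.
    split; [reflexivity|apply not_pointfree_point, N]. }
  split.
  - rewrite <- !emb023_embC. apply sim4_emb023, Hs.
  - intros w Hw Hw'. apply (covered_sim4 Hmid) in Hw.
    destruct Hw as [[d [-> Hd]]|[p [z [H1 [H2 ->]]]]].
    + destruct Hw' as [[p [E _]]|[[p [E _]]|[p [E Hp]]]]; destruct p; try discriminate.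
      injection E as <-. apply (Hu _ Hd). right. exists (inr d). auto.
    + destruct Hw' as [[p1 [E Hp]]|[[p1 [E Hp]]|[p1 [E Hp]]]].
      * apply emb012_e01 in E as ->. apply (Hmid p H1 _ H2). left. exists p1. auto.
      * apply emb012_e12 in E as ->. apply (Hmid p H1 _ H2). right. exists p1. auto.
      * apply emb012_e23 in E as [b [-> ->]].
        apply (Hu (eA (inr b))); [eapply sim3_pointfree_step; eauto|].
        right. exists (inl b). auto.
Qed.

Lemma four_sub_star_star v : four R S U u v -> star (star R S) U u v.
Proof.
  intros [E|[Hs Hu]]; [left; exact E|right].
  assert (Hmid : forall p, sim3 (eC u) (eA p) -> pointfree R S (eC p)).
  { intros p Hp w Hw Hw'. apply (Hu (emb012 w)); [|apply point4_emb012, Hw'].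
    eapply rst_trans.
    - rewrite <- emb023_embC. apply sim4_emb023, Hp.
    - rewrite <- emb012_embC. apply sim4_emb012, Hw. }
  split.
  - destruct (covered_sim4 Hmid _ Hs) as [[d [E Hd]]|[p [z [H1 [H2 E]]]]];
      destruct v as [a|d']; try discriminate.
    + injection E as ->. exact Hd.
    + destruct z; try discriminate. injection E as <-.
      exact (sim3_pointfree_step _ p (inl a) H1 (Hmid p H1) H2).
    + destruct z; discriminate.
  - intros w Hw [[p [-> Hp]]|[p [-> Hp]]].
    + apply (point_not_line_at _ _ Hp), pointfree_line_at; auto.
    + apply (Hu (e23 p)); [|right; right; exists p; auto].
      rewrite <- emb023_embB, <- emb023_embC. apply sim4_emb023, Hw.
Qed.

End StarStar.

Lemma star_star_four R S U : PX R -> PX S -> PX U -> star (star R S) U = four R S U.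
Proof.
  intros HR HS HU. apply req_eq. intros u v.
  split; [apply star_star_sub_four | apply four_sub_star_star]; assumption.
Qed.

Definition flip4 (w : T4) : T4 :=
  match w with L0 x => L3 x | L1 x => L2 x | L2 x => L1 x | L3 x => L0 x end.

Lemma flip4_involutive w : flip4 (flip4 w) = w. Proof. destruct w; reflexivity. Qed.
Lemma flip4_e01 p : flip4 (e01 p) = e23 (swap p). Proof. destruct p; reflexivity. Qed.
Lemma flip4_e12 p : flip4 (e12 p) = e12 (swap p). Proof. destruct p; reflexivity. Qed.
Lemma flip4_e23 p : flip4 (e23 p) = e01 (swap p). Proof. destruct p; reflexivity. Qed.
Lemma flip4_e03 p : flip4 (e03 p) = e03 (swap p). Proof. destruct p; reflexivity. Qed.

Lemma sim4_transp_flip4 R S U w w' :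
  sim4 (transp U) (transp S) (transp R) w w' -> sim4 R S U (flip4 w) (flip4 w').
Proof.
  apply clos_rst_map. intros a b Hab; apply rst_step.
  destruct Hab as [[p [q [-> [-> H]]]]|[[p [q [-> [-> H]]]]|[p [q [-> [-> H]]]]]].
  - right; right. exists (swap p), (swap q). rewrite !flip4_e01. auto.
  - right; left. exists (swap p), (swap q). rewrite !flip4_e12. auto.
  - left. exists (swap p), (swap q). rewrite !flip4_e23. auto.
Qed.

Lemma sim4_transp R S U w w' :
  sim4 (transp U) (transp S) (transp R) w w' <-> sim4 R S U (flip4 w) (flip4 w').
Proof.
  split; [apply sim4_transp_flip4|]. intro H.
  rewrite <- (flip4_involutive w), <- (flip4_involutive w').
  apply sim4_transp_flip4. rewrite !transp_involutive. exact H.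
Qed.

Lemma point4_transp_flip4 R S U w :
  point4 (transp U) (transp S) (transp R) w -> point4 R S U (flip4 w).
Proof.
  intros [[p [-> H]]|[[p [-> H]]|[p [-> H]]]]; apply point_transp in H.
  - right; right. exists (swap p). rewrite flip4_e01. auto.
  - right; left. exists (swap p). rewrite flip4_e12. auto.
  - left. exists (swap p). rewrite flip4_e23. auto.
Qed.

Lemma pointfree4_transp R S U w :
  pointfree4 R S U (flip4 w) -> pointfree4 (transp U) (transp S) (transp R) w.
Proof.
  intros Hw w' Hw' Hp. apply (Hw (flip4 w')).
  - apply sim4_transp, Hw'.
  - apply point4_transp_flip4, Hp.
Qed.

Lemma four_transp_sub R S U u v :
  four R S U u v -> four (transp U) (transp S) (transp R) (swap u) (swap v).
Proof.
  intros [->|[H Hu]]; [left; reflexivity|right]. split.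
  - apply sim4_transp. rewrite !flip4_e03, !swap_involutive. exact H.
  - apply pointfree4_transp. rewrite flip4_e03, swap_involutive. exact Hu.
Qed.

Lemma four_transp R S U : transp (four R S U) = four (transp U) (transp S) (transp R).
Proof.
  apply req_eq. intros u v. split; intro H.
  - apply four_transp_sub in H. rewrite !swap_involutive in H. exact H.
  - apply four_transp_sub in H. rewrite !transp_involutive in H. exact H.
Qed.

Lemma star_assoc R S U : PX R -> PX S -> PX U -> star (star R S) U = star R (star S U).
Proof.
  intros HR HS HU.
  rewrite <- (transp_involutive (star R (star S U))), (star_transp R), (star_transp S),
    (star_star_four (transp U)), four_transp, !transp_involutive by auto using transp_PX.
  apply star_star_four; assumption.
Qed.

Definition copy_of (p : T2) (w : T4) : Prop := w = e01 p \/ w = e23 p \/ w = e12 (swap p).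

Lemma copy_of_e01 p q : copy_of p (e01 q) -> q = p.
Proof. intros [H|[H|H]]; destruct p, q; simpl in H; inversion H; reflexivity. Qed.

Lemma copy_of_e12 p q : copy_of p (e12 q) -> q = swap p.
Proof. intros [H|[H|H]]; destruct p, q; simpl in H; inversion H; reflexivity. Qed.

Lemma copy_of_e23 p q : copy_of p (e23 q) -> q = p.
Proof. intros [H|[H|H]]; destruct p, q; simpl in H; inversion H; reflexivity. Qed.

Lemma sim4_regular_copy R u : PX R ->
  forall w, sim4 R (transp R) R (e03 u) w -> exists p, R u p /\ copy_of p w.
Proof.
  intro HR. apply clos_rst_invariant.
  - apply rel4_sym; auto using transp_PX.
  - intros w w' [p [Hup Hp]]
      [[p1 [q [-> [-> H]]]]|[[p1 [q [-> [-> H]]]]|[p1 [q [-> [-> H]]]]]].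
    + apply copy_of_e01 in Hp as ->. exists q. split; [eapply PX_trans|left]; eauto.
    + apply copy_of_e12 in Hp as ->. unfold transp in H. rewrite swap_involutive in H.
      exists (swap q). split; [eapply PX_trans; eauto|].
      right; right. rewrite swap_involutive. reflexivity.
    + apply copy_of_e23 in Hp as ->. exists q. split; [eapply PX_trans|right; left]; eauto.
  - exists u. split; [apply PX_refl, HR|]. destruct u; [left|right; left]; reflexivity.
Qed.

Lemma sim4_regular_line R a d : PX R -> R (inl a) (inr d) ->
  sim4 R (transp R) R (L0 a) (L3 d).
Proof.
  intros HR H. eapply rst_trans; [|eapply rst_trans].
  - apply rst_step. left. exists (inl a), (inr d). auto.
  - apply rst_step. right; left. exists (inl d), (inr a).
    repeat split. apply (PX_sym R HR), H.
  - apply rst_step. right; right. exists (inl a), (inr d). auto.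
Qed.

Lemma sim4_regular R u v : PX R -> R u v -> sim4 R (transp R) R (e03 u) (e03 v).
Proof.
  intros HR H. destruct u as [a|d], v as [a'|d'].
  - apply rst_step. left. exists (inl a), (inl a'). auto.
  - apply sim4_regular_line; assumption.
  - apply rst_sym, sim4_regular_line, (PX_sym R HR), H. exact HR.
  - apply rst_step. right; right. exists (inr d), (inr d'). auto.
Qed.

Lemma four_regular R : PX R -> four R (transp R) R = R.
Proof.
  intro HR. apply req_eq. intros u v. split.
  - intros [->|[Hs _]]; [apply PX_refl, HR|].
    destruct (sim4_regular_copy R u HR _ Hs) as [p [Hp Hc]].
    destruct v as [a|d].
    + apply (copy_of_e01 p (inl a)) in Hc as ->. exact Hp.
    + apply (copy_of_e23 p (inr d)) in Hc as ->. exact Hp.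
  - intro H. destruct (classic (u = v)) as [E|NE]; [left; exact E|right].
    split; [apply sim4_regular; assumption|].
    intros w Hw Hpt. destruct (sim4_regular_copy R u HR _ Hw) as [p [Hp Hc]].
    assert (Hpp : point R p).
    { destruct Hpt as [[p1 [-> H1]]|[[p1 [-> H1]]|[p1 [-> H1]]]].
      - apply copy_of_e01 in Hc as ->. exact H1.
      - apply copy_of_e12 in Hc as ->.
        apply (point_transp (transp R)) in H1. rewrite transp_involutive in H1. exact H1.
      - apply copy_of_e23 in Hc as ->. exact H1. }
    apply NE. transitivity p.
    + apply Hpp, (PX_sym R HR), Hp.
    + symmetry. apply Hpp, (PX_trans R HR p u v); [apply (PX_sym R HR)|]; assumption.
Qed.

Lemma star_regular R : PX R -> star (star R (transp R)) R = R.
Proof.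
  intro HR. rewrite star_star_four by auto using transp_PX. apply four_regular, HR.
Qed.

Definition diagonal (D : rel) : Prop := forall p, point D p \/ D p (swap p).

Lemma diagonal_swap D u v : PX D -> diagonal D -> D u v -> D (swap u) (swap v).
Proof.
  intros HD Hdiag H. destruct (classic (u = v)) as [<-|NE]; [apply PX_refl, HD|].
  assert (Hu : D u (swap u)).
  { destruct (Hdiag u) as [P|P]; [exfalso; apply NE; symmetry; apply P, H|exact P]. }
  assert (Hv : D v (swap v)).
  { destruct (Hdiag v) as [P|P]; [exfalso; apply NE; apply P, (PX_sym D HD), H|exact P]. }
  apply (PX_trans D HD _ u); [apply (PX_sym D HD), Hu|].
  apply (PX_trans D HD _ v); assumption.
Qed.

Lemma diagonal_transp D : PX D -> diagonal D -> transp D = D.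
Proof.
  intros HD Hdiag. apply req_eq. intros u v. unfold transp. split; intro H.
  - apply diagonal_swap in H; [|assumption..]. rewrite !swap_involutive in H. exact H.
  - apply diagonal_swap; assumption.
Qed.

Lemma star_transp_diagonal R : PX R -> diagonal (star R (transp R)).
Proof.
  intros HR p. destruct (classic (pointfree R (transp R) (eC p))) as [P|N].
  2: { left. apply not_pointfree_point, N. }
  right. apply starE. right. split; [|exact P]. destruct p as [a|a].
  - destruct (PX_nonpoint_line R (inl a) HR) as [_ [b Hb]].
    { apply (pointfree_embA _ _ _ _ P), sim_refl. }
    apply (sim_trans _ _ _ (eA (inr b))); [apply (sim_embA _ _ (inl a) (inr b) Hb)|].
    apply (sim_embB _ _ (inl b) (inr a)). apply (PX_sym R HR), Hb.
  - destruct (PX_nonpoint_line (transp R) (inr a) (transp_PX R HR)) as [[b Hb] _].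
    { apply (pointfree_embB _ _ _ _ P), sim_refl. }
    apply (sim_trans _ _ _ (eB (inl b))); [apply (sim_embB _ _ (inr a) (inl b) Hb)|].
    apply (sim_embA _ _ (inr b) (inl a)). apply (PX_sym R HR), Hb.
Qed.

Lemma star_diagonal D E : PX D -> PX E -> diagonal D -> diagonal E -> diagonal (star D E).
Proof.
  intros HD HE Dd De p. destruct (classic (pointfree D E (eC p))) as [P|N].
  2: { left. apply not_pointfree_point, N. }
  right. apply starE. right. split; [|exact P]. destruct p as [a|a].
  - assert (H1 : D (inl a) (inr a)).
    { destruct (Dd (inl a)) as [Q|Q]; [|exact Q].
      exfalso. exact (pointfree_embA _ _ _ (inl a) P (sim_refl _ _ _) Q). }
    assert (S1 : sim D E (eC (inl a)) (eB (inl a))) by exact (sim_embA _ _ _ _ H1).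
    assert (H2 : E (inl a) (inr a)).
    { destruct (De (inl a)) as [Q|Q]; [|exact Q].
      exfalso. exact (pointfree_embB _ _ _ _ P S1 Q). }
    exact (sim_trans _ _ _ _ _ S1 (sim_embB _ _ _ _ H2)).
  - assert (H1 : E (inr a) (inl a)).
    { destruct (De (inr a)) as [Q|Q]; [|exact Q].
      exfalso. exact (pointfree_embB _ _ _ (inr a) P (sim_refl _ _ _) Q). }
    assert (S1 : sim D E (eC (inr a)) (eA (inr a))) by exact (sim_embB _ _ _ _ H1).
    assert (H2 : D (inr a) (inl a)).
    { destruct (Dd (inr a)) as [Q|Q]; [|exact Q].
      exfalso. exact (pointfree_embA _ _ _ _ P S1 Q). }
    exact (sim_trans _ _ _ _ _ S1 (sim_embA _ _ _ _ H2)).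
Qed.

Lemma star_diagonal_comm D E : PX D -> PX E -> diagonal D -> diagonal E ->
  star D E = star E D.
Proof.
  intros HD HE Dd De.
  rewrite <- (transp_involutive (star D E)), star_transp, (diagonal_transp D),
    (diagonal_transp E) by assumption.
  apply diagonal_transp; [apply star_PX|apply star_diagonal]; assumption.
Qed.

Lemma star_idempotent_diagonal e : PX e -> star e e = e -> diagonal e.
Proof.
  intros He Hee.
  assert (HeT : star (transp e) (transp e) = transp e)
    by (rewrite <- star_transp, Hee; reflexivity).
  assert (Hfactor : star (star e (transp e)) (star (transp e) e) = e).
  { rewrite <- star_assoc, (star_assoc e (transp e) (transp e)), HeT
      by auto using star_PX, transp_PX.
    apply star_regular, He. }
  rewrite <- Hfactor. apply star_diagonal; auto using star_PX, transp_PX.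
  - apply star_transp_diagonal, He.
  - rewrite <- (transp_involutive e) at 2. apply star_transp_diagonal, transp_PX, He.
Qed.

Lemma star_idempotents_commute e f : PX e -> PX f ->
  star e e = e -> star f f = f -> star e f = star f e.
Proof.
  intros He Hf Hee Hff.
  apply star_diagonal_comm; auto using star_idempotent_diagonal.
Qed.

Lemma star_inverse_unique R S : PX R -> PX S ->
  star (star R S) R = R -> star (star S R) S = S -> S = transp R.
Proof.
  intros HR HS H1 H2. apply (inverse_unique _ PX star) with (a := R);
    auto using star_PX, star_assoc, star_idempotents_commute, transp_PX, star_regular.
  rewrite <- (transp_involutive R) at 2. apply star_regular, transp_PX, HR.
Qed.

End Star.

Section Circ.
Context {X : Type}.
Local Notation T2 := (T2 X).
Local Notation rel := (prel X).
Local Notation PX := (isPX X).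
Local Notation line_at := (is_genline_at X).
Local Notation circ := (circ X).

Definition in_line (A B : X -> Prop) (u : T2) : Prop :=
  match u with inl a => A a | inr d => B d end.

Definition is_line (R : rel) (A B : X -> Prop) : Prop :=
  exists w, line_at R w /\ A = (fun a => R w (inl a)) /\ B = (fun b => R w (inr b)).

Lemma pred_ext (A B : X -> Prop) : (forall x, A x <-> B x) -> A = B.
Proof.
  intro H. apply functional_extensionality; intro x. apply propositional_extensionality, H.
Qed.

Lemma in_line_block (R : rel) w u :
  in_line (fun a => R w (inl a)) (fun b => R w (inr b)) u <-> R w u.
Proof. destruct u; reflexivity. Qed.

Lemma is_line_nonempty R A B : is_line R A B -> (exists a, A a) /\ (exists b, B b).
Proof. intros [w [[[a Ha] [b Hb]] [-> ->]]]. split; eauto. Qed.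

Lemma is_line_unique R A B A' B' u : PX R -> is_line R A B -> is_line R A' B' ->
  in_line A B u -> in_line A' B' u -> A = A' /\ B = B'.
Proof.
  intros HR [w [_ [-> ->]]] [w' [_ [-> ->]]] H H'.
  apply in_line_block in H, H'.
  assert (Hw : R w w') by (apply (PX_trans R HR _ u); [|apply (PX_sym R HR)]; assumption).
  assert (Hw' : R w' w) by (apply (PX_sym R HR), Hw).
  split; apply pred_ext; intro x; split; apply (PX_trans R HR); assumption.
Qed.

Lemma PX_lineE R u v : PX R ->
  R u v <-> u = v \/ exists A B, is_line R A B /\ in_line A B u /\ in_line A B v.
Proof.
  intro HR. split.
  - intro H. destruct (classic (u = v)) as [E|NE]; [left; exact E|right].
    exists (fun a => R u (inl a)), (fun b => R u (inr b)). split.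
    + exists u. split; [|split; reflexivity].
      apply PX_nonpoint_line; [exact HR|]. intro P. apply NE. symmetry. apply P, H.
    + split; apply in_line_block; [apply PX_refl, HR|exact H].
  - intros [->|[A [B [[w [_ [-> ->]]] [H1 H2]]]]]; [apply PX_refl, HR|].
    apply in_line_block in H1, H2.
    apply (PX_trans R HR _ w); [apply (PX_sym R HR)|]; assumption.
Qed.

Lemma PX_ext_lines R R' : PX R -> PX R' ->
  (forall A B, is_line R A B <-> is_line R' A B) -> R = R'.
Proof.
  intros HR HR' H. apply req_eq. intros u v. rewrite (PX_lineE R), (PX_lineE R') by assumption.
  split; intros [E|[A [B [L I]]]]; auto; right; exists A, B; [rewrite <- H|rewrite H]; auto.
Qed.

Lemma circE R S u v : circ R S u v <->
  u = v \/ exists A B D, is_line R A B /\ is_line S B D /\ in_line A D u /\ in_line A D v.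
Proof.
  split.
  - intros [E|[w1 [w2 [[G1 [G2 Hmid]] [Iu Iv]]]]]; [left; exact E|right].
    exists (fun a => R w1 (inl a)), (fun b => R w1 (inr b)), (fun d => S w2 (inr d)).
    split; [exists w1; auto|split; [exists w2|destruct u, v; auto]].
    split; [exact G2|split; [apply pred_ext, Hmid|reflexivity]].
  - intros [E|[A [B [D [[w1 [G1 [-> ->]]] [[w2 [G2 [EB ->]]] [Iu Iv]]]]]]];
      [left; exact E|right].
    exists w1, w2. split; [split; [exact G1|split; [exact G2|]]|destruct u, v; auto].
    intro b. pose proof (equal_f EB b) as Eb. simpl in Eb. rewrite Eb. reflexivity.
Qed.

Lemma circ_block_unique R S A B D A' B' D' u : PX R -> PX S ->
  is_line R A B -> is_line S B D -> is_line R A' B' -> is_line S B' D' ->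
  in_line A D u -> in_line A' D' u -> A = A' /\ B = B' /\ D = D'.
Proof.
  intros HR HS L1 L2 L1' L2' I I'. destruct u as [a|d].
  - destruct (is_line_unique R A B A' B' (inl a) HR L1 L1' I I') as [-> ->].
    destruct (is_line_nonempty R A' B' L1) as [_ [b Hb]].
    destruct (is_line_unique S B' D B' D' (inl b) HS L2 L2' Hb Hb) as [_ ->]. auto.
  - destruct (is_line_unique S B D B' D' (inr d) HS L2 L2' I I') as [-> ->].
    destruct (is_line_nonempty R A B' L1) as [_ [b Hb]].
    destruct (is_line_unique R A B' A' B' (inr b) HR L1 L1' Hb Hb) as [-> _]. auto.
Qed.

Lemma circ_class R S A B D u : PX R -> PX S -> is_line R A B -> is_line S B D ->
  in_line A D u -> forall z, circ R S u z <-> in_line A D z.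
Proof.
  intros HR HS L1 L2 Iu z. rewrite circE. split.
  - intros [<-|[A' [B' [D' [L1' [L2' [I1 I2]]]]]]]; [exact Iu|].
    destruct (circ_block_unique R S A B D A' B' D' u HR HS L1 L2 L1' L2' Iu I1)
      as [-> [-> ->]].
    exact I2.
  - intro H. right. exists A, B, D. auto.
Qed.

Lemma circ_class_line R S A B D u : PX R -> PX S -> is_line R A B -> is_line S B D ->
  in_line A D u -> line_at (circ R S) u.
Proof.
  intros HR HS L1 L2 Iu.
  destruct (is_line_nonempty R A B L1) as [[a Ha] _].
  destruct (is_line_nonempty S B D L2) as [_ [d Hd]].
  split; [exists a|exists d]; apply (circ_class R S A B D u); assumption.
Qed.

Lemma is_line_circ R S A D : PX R -> PX S ->
  is_line (circ R S) A D <-> exists B, is_line R A B /\ is_line S B D.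
Proof.
  intros HR HS. split.
  - intros [w [[[a Ha] [d Hd]] [-> ->]]].
    assert (Hw : exists A0 B0 D0, is_line R A0 B0 /\ is_line S B0 D0 /\ in_line A0 D0 w).
    { apply circE in Ha as [->|[A0 [B0 [D0 [L1 [L2 [Iw _]]]]]]].
      - apply circE in Hd as [E|[A0 [B0 [D0 [L1 [L2 [Iw _]]]]]]]; [discriminate|].
        exists A0, B0, D0. auto.
      - exists A0, B0, D0. auto. }
    destruct Hw as [A0 [B0 [D0 [L1 [L2 Iw]]]]].
    exists B0. assert (Hcl := circ_class R S A0 B0 D0 w HR HS L1 L2 Iw).
    replace (fun a => circ R S w (inl a)) with A0
      by (apply pred_ext; intro x; symmetry; apply (Hcl (inl x))).
    replace (fun d => circ R S w (inr d)) with D0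
      by (apply pred_ext; intro x; symmetry; apply (Hcl (inr x))).
    auto.
  - intros [B [L1 L2]].
    destruct (is_line_nonempty R A B L1) as [[a Ha] _].
    assert (Hcl := circ_class R S A B D (inl a) HR HS L1 L2 Ha).
    exists (inl a). split; [apply (circ_class_line R S A B D); assumption|].
    split; apply pred_ext; intro x; symmetry; apply Hcl.
Qed.

Lemma circ_PX R S : PX R -> PX S -> PX (circ R S).
Proof.
  intros HR HS. split.
  - split.
    + intro u. left. reflexivity.
    + intros u v w H1 H2. apply circE in H1, H2. apply circE.
      destruct H1 as [->|[A [B [D [L1 [L2 [Iu Iv]]]]]]]; [exact H2|].
      destruct H2 as [<-|[A' [B' [D' [L1' [L2' [Iv' Iw]]]]]]];
        [right; exists A, B, D; auto|].
      destruct (circ_block_unique R S A B D A' B' D' v HR HS L1 L2 L1' L2' Iv Iv')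
        as [-> [-> ->]].
      right. exists A', B', D'. auto.
    + intros u v H. apply circE in H. apply circE.
      destruct H as [->|[A [B [D [L1 [L2 [Iu Iv]]]]]]]; [left; reflexivity|].
      right. exists A, B, D. auto.
  - intro u.
    destruct (classic (exists A B D, is_line R A B /\ is_line S B D /\ in_line A D u))
      as [[A [B [D [L1 [L2 Iu]]]]]|N].
    + right. apply (circ_class_line R S A B D); assumption.
    + left. intros v H. apply circE in H as [->|[A [B [D [L1 [L2 [Iv _]]]]]]]; [reflexivity|].
      exfalso. apply N. exists A, B, D. auto.
Qed.

Lemma circ_assoc R S U : PX R -> PX S -> PX U -> circ (circ R S) U = circ R (circ S U).
Proof.
  intros HR HS HU. apply PX_ext_lines; auto using circ_PX. intros A E.
  rewrite !is_line_circ by auto using circ_PX. split.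
  - intros [D [L1 L2]]. apply is_line_circ in L1 as [B [L3 L4]]; [|assumption..].
    exists B. split; [exact L3|]. apply is_line_circ; eauto.
  - intros [B [L1 L2]]. apply is_line_circ in L2 as [D [L3 L4]]; [|assumption..].
    exists D. split; [|exact L4]. apply is_line_circ; eauto.
Qed.

Lemma is_line_transp R A B : is_line (transp R) A B <-> is_line R B A.
Proof.
  split; intros [w [[[a Ha] [b Hb]] [-> ->]]]; exists (swap w);
    destruct w; (split; [split; [exists b|exists a]; assumption|split; reflexivity]).
Qed.

Lemma circ_regular R : PX R -> circ (circ R (transp R)) R = R.
Proof.
  intros HR. apply PX_ext_lines; auto using circ_PX, transp_PX. intros A B.
  rewrite is_line_circ by auto using circ_PX, transp_PX. split.
  - intros [D [L1 L2]]. apply is_line_circ in L1 as [B1 [L3 L4]]; auto using transp_PX.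
    rewrite is_line_transp in L4.
    destruct (is_line_nonempty R A B1 L3) as [_ [b Hb]].
    destruct (is_line_unique R A B1 D B1 (inr b) HR L3 L4 Hb Hb) as [-> _]. exact L2.
  - intro L. exists A. split; [|exact L].
    apply is_line_circ; auto using transp_PX. exists B. split; [exact L|].
    apply is_line_transp, L.
Qed.

Lemma circ_inverse_unique R S : PX R -> PX S ->
  circ (circ R S) R = R -> circ (circ S R) S = S -> S = transp R.
Proof.
  intros HR HS E1 E2.
  assert (F : forall A B, is_line R A B -> is_line S B A).
  { intros A B L0. assert (L := L0). rewrite <- E1 in L.
    apply is_line_circ in L as [D [L1 L2]]; auto using circ_PX.
    apply is_line_circ in L1 as [B1 [L3 L4]]; [|assumption..].
    destruct (is_line_nonempty R A B L0) as [[a Ha] [b Hb]].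
    destruct (is_line_unique R A B1 A B (inl a) HR L3 L0 Ha Ha) as [_ ->].
    destruct (is_line_unique R D B A B (inr b) HR L2 L0 Hb Hb) as [-> _]. exact L4. }
  apply PX_ext_lines; auto using transp_PX. intros A B. rewrite is_line_transp. split.
  - intro L0. assert (L := L0). rewrite <- E2 in L.
    apply is_line_circ in L as [D [L1 L2]]; auto using circ_PX.
    apply is_line_circ in L1 as [A1 [L3 L4]]; [|assumption..].
    destruct (is_line_nonempty S A A1 L3) as [[a Ha] [x Hx]].
    destruct (is_line_unique S A A1 D A1 (inr x) HS L3 (F _ _ L4) Hx Hx) as [<- _].
    destruct (is_line_unique S A A1 A B (inl a) HS L3 L0 Ha Ha) as [_ <-]. exact L4.
  - apply F.
Qed.

End Circ.

Theorem mainTheorem1 : forall X : Type,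
  inverse_semigroup (isPX X) (star X) /\ inverse_semigroup (isPX X) (circ X).
Proof.
  intro X. split; apply (inverse_semigroup_intro _ _ transp).
  - exact star_PX.
  - exact star_assoc.
  - exact transp_PX.
  - exact transp_involutive.
  - exact star_regular.
  - exact star_inverse_unique.
  - exact circ_PX.
  - exact circ_assoc.
  - exact transp_PX.
  - exact transp_involutive.
  - exact circ_regular.
  - exact circ_inverse_unique.
Qed.
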